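(* Let $t \ge 2$ and let $q$ be a prime power. There do not exist vertices $a_1, b_1, \dots, a_{t+2}, b_{t+2}$ of $G(t,q)$ (not necessarily distinct) such that $a_i b_j \in E(G(t,q))$ for all $1 \le i < j \le t+2$ and $a_i b_i \notin E(G(t,q))$ for all $i \in [t+2]$.
   Context: $PG(t,q)$ denotes the projective space of dimension $t$ over $\mathbb{F}_q$: its points are the equivalence classes of nonzero vectors in $\mathbb{F}_q^{t+1}$ under the relation identifying a vector with its nonzero scalar multiples. $G(t,q)$ is the graph (possibly with loops) with vertex set $PG(t,q)$ in which two (not necessarily distinct) vertices represented by $\mathbf{x}, \mathbf{y}$ are adjacent if and only if $\langle \mathbf{x}, \mathbf{y}\rangle = \sum_{i=1}^{t+1} x_i y_i = 0$; in particular there is a loop at $\mathbf{x}$ iff $\langle \mathbf{x},\mathbf{x}\rangle = 0$, and $a_ia_i$ being an edge means a loop. *)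

From mathcomp Require Import all_boot all_order all_algebra all_field.
Set Implicit Arguments. Unset Strict Implicit. Unset Printing Implicit Defensive.
Import GRing.Theory.
Local Open Scope ring_scope.

(* Points of PG(t,q), q = #|F| for a finite field F, are represented by their
   nonzero representative vectors in F^(t+1) (row vectors).  A vertex of
   G(t,q) is any such nonzero vector; two representatives of the same
   projective point have the same adjacencies, so quantifying over
   representatives is the same as quantifying over projective points. *)
Definition pg_vertex (F : finFieldType) (n : nat) (x : 'rV[F]_n) : bool :=
  x != 0.

Definition pg_dot (F : finFieldType) (n : nat) (x y : 'rV[F]_n) : F :=
  \sum_(i < n) x ord0 i * y ord0 i.

Definition G_adj (F : finFieldType) (n : nat) (x y : 'rV[F]_n) : bool :=
  pg_dot x y == 0.

From mathcomp Require Import all_boot all_order all_algebra all_field.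
Set Implicit Arguments.
Unset Strict Implicit.
Unset Printing Implicit Defensive.

Import GRing.Theory.
Local Open Scope ring_scope.

(* Stack the a_i as the rows of A and the b_j as the columns of B.  The
   hypotheses say exactly that A *m B is triangular with a nonzero diagonal,
   hence invertible, so t + 2 = \rank (A *m B) <= \rank A <= t + 1. *)

Section TriangularFactorization.

Variable F : fieldType.

Lemma trig_unitmx (n : nat) (M : 'M[F]_n) :
  is_trig_mx M -> (forall i, M i i != 0) -> M \in unitmx.
Proof.
move=> Mtrig diag_neq0; rewrite unitmxE (det_trig Mtrig) unitfE.
by rewrite prodf_seq_neq0; apply/allP => i _; apply: diag_neq0.
Qed.

Lemma trig_mulmx_leq (m n : nat) (A : 'M[F]_(m, n)) (B : 'M[F]_(n, m)) :
  is_trig_mx (A *m B) -> (forall i, (A *m B) i i != 0) -> (m <= n)%N.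
Proof.
move=> ABtrig diag_neq0.
rewrite -{1}(mxrank_unit (trig_unitmx ABtrig diag_neq0)).
exact: leq_trans (mxrankM_maxl A B) (rank_leq_col A).
Qed.

End TriangularFactorization.

Lemma mulmx_rows_tr_pg_dot (F : finFieldType) (m n : nat)
    (a b : 'I_m -> 'rV[F]_n) (i j : 'I_m) :
  ((\matrix_i a i) *m (\matrix_j b j)^T) i j = pg_dot (a i) (b j).
Proof. by rewrite !mxE; apply: eq_bigr => k _; rewrite !mxE. Qed.

Lemma G_adj_trig_leq (F : finFieldType) (m n : nat) (a b : 'I_m -> 'rV[F]_n) :
  (forall i j : 'I_m, (i < j)%N -> G_adj (a i) (b j)) ->
  (forall i, ~~ G_adj (a i) (b i)) -> (m <= n)%N.
Proof.
move=> adj_lt nadj_diag.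
apply: (@trig_mulmx_leq _ _ _ (\matrix_i a i) (\matrix_j b j)^T).
- by apply/is_trig_mxP => i j ltij; rewrite mulmx_rows_tr_pg_dot; apply/eqP/adj_lt.
- by move=> i; rewrite mulmx_rows_tr_pg_dot; apply: nadj_diag.
Qed.

Theorem lemma2p2 (F : finFieldType) (t : nat) (ht : (2 <= t)%N) :
  ~ exists (a b : 'I_(t + 2) -> 'rV[F]_(t + 1)),
      [/\ forall i, pg_vertex (a i) && pg_vertex (b i),
          forall i j : 'I_(t + 2), (i < j)%N -> G_adj (a i) (b j)
        & forall i, ~~ G_adj (a i) (b i)].
Proof.
case=> a [b [_ adj_lt nadj_diag]].
by have := G_adj_trig_leq adj_lt nadj_diag; rewrite leq_add2l.
Qed.
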